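(* Let $f:\Sigma\to\mathbb{L}^3$ be a minface, written near a regular point $p$ in local coordinates $(u,v)$ as $f(u,v)=\frac{\varphi(u)+\psi(v)}{2}$ with $\varphi(u)=\int_{u_0}^u(-1-g_1^2,1-g_1^2,2g_1)\hat\omega_1\,du$ and $\psi(v)=\int_{v_0}^v(1+g_2^2,1-g_2^2,-2g_2)\hat\omega_2\,dv$ (plus a constant), and let $p=(u_p,v_p)$. Then: (i) $p$ is an umbilic point of $f$ if and only if both null curves $\varphi$ and $\psi$ are degenerate at $p$ (i.e. $\varphi$ at $u_p$ and $\psi$ at $v_p$); (ii) $p$ is a quasi-umbilic point of $f$ if and only if exactly one of the two null curves $\varphi$, $\psi$ is degenerate at $p$.
   Context: $\mathbb{L}^3$ is $\mathbb{R}^3$ with the Lorentzian metric $-(dx^0)^2+(dx^1)^2+(dx^2)^2$. A smooth map $f:\Sigma\to\mathbb{L}^3$ from a connected oriented 2-manifold is a minface if around each point there are local coordinates $(u,v)$ on a domain $U$, smooth functions $g_1(u)$, $g_2(v)$ and nowhere-vanishing smooth functions $\hat\omega_1(u)$, $\hat\omega_2(v)$, with $g_1g_2\neq1$ on an open dense subset of $U$, such that $f=\frac{\varphi(u)+\psi(v)}{2}+\mathrm{const}$ with $\varphi,\psi$ as in the claim; $\varphi$ and $\psi$ are null curves (regular curves with lightlike velocity). Regular points are points where $f$ is an immersion; there $f$ is a timelike immersion with zero mean curvature. A null curve $\gamma$ is degenerate at $t$ if $\gamma'(t)\times\gamma''(t)=0$ (cross product) and non-degenerate otherwise. At a regular point,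 with spacelike unit normal $\nu$, the shape operator $S$ is given by $df(S(X))=-\overline\nabla_X\nu$; the point is umbilic if the second fundamental form is a scalar multiple of the first fundamental form there, and quasi-umbilic if $S$ is not diagonalizable over $\mathbb{C}$ there. *)

From HB Require Import structures.
From mathcomp Require Import all_boot all_order all_algebra.
From mathcomp Require Import all_classical all_reals all_analysis.
From mathcomp.real_closed Require Import complex.
Set Implicit Arguments. Unset Strict Implicit. Unset Printing Implicit Defensive.
Import Order.TTheory GRing.Theory Num.Theory numFieldNormedType.Exports.
Local Open Scope ring_scope.

Section Minface.
Variable R : realType.

Definition vec3 := 'rV[R]_3.

Definition lvec (a b c : R) : vec3 := \row_(i < 3) nth 0 [:: a; b; c] i.

Definition coord (x : vec3) (k : nat) : R := x ord0 (inord k).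

Definition ldot (x y : vec3) : R :=
  - coord x 0 * coord y 0 + coord x 1 * coord y 1 + coord x 2 * coord y 2.

(* Lorentzian cross product: ldot (lcross x y) z = det (x, y, z). *)
Definition lcross (x y : vec3) : vec3 :=
  lvec (- (coord x 1 * coord y 2 - coord x 2 * coord y 1))
       (coord x 2 * coord y 0 - coord x 0 * coord y 2)
       (coord x 0 * coord y 1 - coord x 1 * coord y 0).

Definition smooth_near (g : R -> R) (x : R) : Prop :=
  forall n : nat, \forall y \near x,
    derivable (iter n (fun h : R -> R => derive1 h) g) y 1.

Definition degenerate (gamma : R -> vec3) (t : R) : Prop :=
  lcross (derive1 gamma t) (derive1 (derive1 gamma) t) = 0.

Definition chart_f (phi psi : R -> vec3) (c : vec3) : R -> R -> vec3 :=
  fun u v => 2^-1 *: (phi u + psi v) + c.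

Definition pu (F : R -> R -> vec3) (u v : R) : vec3 := derive1 (fun s => F s v) u.
Definition pv (F : R -> R -> vec3) (u v : R) : vec3 := derive1 (fun t => F u t) v.

Definition dF (F : R -> R -> vec3) (u v : R) (i : 'I_2) : vec3 :=
  if val i == 0%N then pu F u v else pv F u v.

Definition regular_at (f : R -> R -> vec3) (u v : R) : Prop :=
  forall a b : R, a *: pu f u v + b *: pv f u v = 0 -> a = 0 /\ b = 0.

Definition unit_normal (f : R -> R -> vec3) : R -> R -> vec3 :=
  fun u v => let N := lcross (pu f u v) (pv f u v) in
             (Num.sqrt (ldot N N))^-1 *: N.

Definition first_ff (f : R -> R -> vec3) (u v : R) (i j : 'I_2) : R :=
  ldot (dF f u v i) (dF f u v j).

Definition second_ff (f : R -> R -> vec3) (u v : R) (i j : 'I_2) : R :=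
  - ldot (dF (unit_normal f) u v i) (dF f u v j).

Definition is_shape_operator (f : R -> R -> vec3) (u v : R) (S : 'M[R]_2) : Prop :=
  forall j : 'I_2, \sum_(i < 2) S i j *: dF f u v i = - dF (unit_normal f) u v j.

Definition umbilic (f : R -> R -> vec3) (u v : R) : Prop :=
  regular_at f u v /\
  exists lam : R, forall i j : 'I_2, second_ff f u v i j = lam * first_ff f u v i j.

Definition quasi_umbilic (f : R -> R -> vec3) (u v : R) : Prop :=
  regular_at f u v /\
  exists S : 'M[R]_2, is_shape_operator f u v S /\
    ~ diagonalizable (map_mx (fun x : R => (Complex x 0 : R[i])) S).

End Minface.

From Pilot Require Import Defs.
From HB Require Import structures.
From mathcomp Require Import all_boot all_order all_algebra.
From mathcomp Require Import all_classical all_reals all_analysis.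
From mathcomp.real_closed Require Import complex.
From mathcomp Require Import ring lra.
Import Order.TTheory GRing.Theory Num.Theory numFieldNormedType.Exports.
Local Open Scope ring_scope.

Local Notation coord := Defs.coord.

(* At p, f_u = phi'/2 and f_v = psi'/2 are null vectors and, f being an
   immersion, <f_u, f_v> = g != 0; so (f_u, f_v, f_u x f_v) is a frame in
   which the first fundamental form has no diagonal part.  Since f_uv = 0,
   differentiating <nu, nu> = 1 and <nu, f_u> = <nu, f_v> = 0 gives the
   Weingarten equations nu_u = -(h_uu/g) f_v and nu_v = -(h_vv/g) f_u.  Hence
   the second fundamental form is diagonal and the shape operator is the
   antidiagonal matrix with entries h_vv/g and h_uu/g.  Moreover
   h_uu = <nu, phi''/2> and phi'' is orthogonal to the null vector phi', so
   phi' x phi'' = 0 iff h_uu = 0; likewise for psi.  Umbilicity forces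
   h_uu = h_vv = 0, and an antidiagonal 2x2 matrix fails to be diagonalizable
   over C exactly when one of its two entries vanishes and the other does not. *)

Section LorentzAlgebra.
Context {R : realType}.
Implicit Types (k l : R) (x y z a b : vec3 R).

Lemma coord_lvec0 k l (m : R) : coord (lvec k l m) 0 = k.
Proof. by rewrite /coord /lvec mxE inordK. Qed.
Lemma coord_lvec1 k l (m : R) : coord (lvec k l m) 1 = l.
Proof. by rewrite /coord /lvec mxE inordK. Qed.
Lemma coord_lvec2 k l (m : R) : coord (lvec k l m) 2 = m.
Proof. by rewrite /coord /lvec mxE inordK. Qed.
Lemma coordD x y n : coord (x + y) n = coord x n + coord y n.
Proof. by rewrite /coord mxE. Qed.
Lemma coordN x n : coord (- x) n = - coord x n.
Proof. by rewrite /coord mxE. Qed.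
Lemma coordZ k x n : coord (k *: x) n = k * coord x n.
Proof. by rewrite /coord mxE. Qed.
Lemma coord0 n : coord (0 : vec3 R) n = 0.
Proof. by rewrite /coord mxE. Qed.

Definition coordE :=
  (coord_lvec0, coord_lvec1, coord_lvec2, coordD, coordN, coordZ, coord0).

Lemma vec3P x y : coord x 0 = coord y 0 -> coord x 1 = coord y 1 ->
  coord x 2 = coord y 2 -> x = y.
Proof.
rewrite /coord => e0 e1 e2; apply/rowP => -[[|[|[|//]]] lt_i3];
  [move: e0 | move: e1 | move: e2]; congr (_ = _); congr (_ _ _); exact/val_inj/inordK.
Qed.

Lemma ldotC x y : ldot x y = ldot y x.
Proof. by rewrite /ldot; ring. Qed.
Lemma ldotZl k x y : ldot (k *: x) y = k * ldot x y.
Proof. by rewrite /ldot !coordE; ring. Qed.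
Lemma ldotZr k x y : ldot x (k *: y) = k * ldot x y.
Proof. by rewrite /ldot !coordE; ring. Qed.
Lemma ldotNl x y : ldot (- x) y = - ldot x y.
Proof. by rewrite /ldot !coordE; ring. Qed.
Lemma ldotDl x y z : ldot (x + y) z = ldot x z + ldot y z.
Proof. by rewrite /ldot !coordE; ring. Qed.
Lemma ldot0l x : ldot 0 x = 0.
Proof. by rewrite /ldot !coordE; ring. Qed.

Lemma lcrossC x y : lcross y x = - lcross x y.
Proof. by apply: vec3P; rewrite /lcross !coordE; ring. Qed.
Lemma lcrossZl k x y : lcross (k *: x) y = k *: lcross x y.
Proof. by apply: vec3P; rewrite /lcross !coordE; ring. Qed.
Lemma lcross_scale_self k x : lcross x (k *: x) = 0.
Proof. by apply: vec3P; rewrite /lcross !coordE; ring. Qed.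

Lemma ldot_lcrossl x y : ldot (lcross x y) x = 0.
Proof. by rewrite /ldot /lcross !coordE; ring. Qed.
Lemma ldot_lcrossr x y : ldot (lcross x y) y = 0.
Proof. by rewrite /ldot /lcross !coordE; ring. Qed.
Lemma ldot_lcross_swap x y z : ldot (lcross x y) z = - ldot (lcross x z) y.
Proof. by rewrite /ldot /lcross !coordE; ring. Qed.
Lemma ldot_lcross_self x y :
  ldot (lcross x y) (lcross x y) = ldot x y ^+ 2 - ldot x x * ldot y y.
Proof. by rewrite /ldot /lcross !coordE; ring. Qed.

Lemma lorentz_gram x y z :
  (ldot x x * ldot y y - ldot x y ^+ 2) *: z =
    (ldot y y * ldot z x - ldot x y * ldot z y) *: x
  + (ldot x x * ldot z y - ldot x y * ldot z x) *: y
  - ldot z (lcross x y) *: lcross x y.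
Proof. by apply: vec3P; rewrite /ldot /lcross !coordE; ring. Qed.

Lemma null_independent_ldot_neq0 a b :
  (forall k l, k *: a + l *: b = 0 -> k = 0 /\ l = 0) ->
  ldot a a = 0 -> ldot b b = 0 -> ldot a b != 0.
Proof.
move=> free aa0 bb0; apply/eqP => ab0.
(* [u] is null with zero time component, hence zero. *)
pose u := coord b 0 *: a + (- coord a 0) *: b.
have uu : ldot u u = coord u 1 ^+ 2 + coord u 2 ^+ 2.
  by rewrite /ldot /u !coordE; ring.
have {}uu : coord u 1 ^+ 2 + coord u 2 ^+ 2 = 0.
  rewrite -uu /u !(ldotDl, ldotZl) ![ldot _ (_ + _)]ldotC !(ldotDl, ldotZl).
  by rewrite aa0 bb0 [ldot b a]ldotC ab0; ring.
have u0 : u = 0.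
  move/eqP: uu; rewrite paddr_eq0 ?sqr_ge0 // !sqrf_eq0 => /andP[/eqP u1 /eqP u2].
  by apply: vec3P; rewrite ?u1 ?u2 /u !coordE //; ring.
have [b00 a00] := free _ _ u0; move/eqP: a00; rewrite oppr_eq0 => /eqP a00.
have a12 : coord a 1 ^+ 2 + coord a 2 ^+ 2 = 0.
  by move: aa0; rewrite /ldot a00; lra.
have a0 : a = 0.
  move/eqP: a12; rewrite paddr_eq0 ?sqr_ge0 // !sqrf_eq0 => /andP[/eqP a1 /eqP a2].
  by apply: vec3P; rewrite ?a1 ?a2 ?a00 !coordE.
have [] := free 1 0; last by move/eqP; rewrite oner_eq0.
by rewrite a0 scale0r scaler0 addr0.
Qed.

Section NullFrame.
Context {a b : vec3 R}.
Hypotheses (a_null : ldot a a = 0) (b_null : ldot b b = 0) (ab_neq0 : ldot a b != 0).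

Lemma null_frame_decomposition {z} : ldot z (lcross a b) = 0 ->
  z = (ldot z b / ldot a b) *: a + (ldot z a / ldot a b) *: b.
Proof.
move=> zn; have gram := lorentz_gram a b z.
rewrite a_null b_null zn mul0r sub0r scale0r subr0 in gram.
have G0 : - ldot a b ^+ 2 != 0 by rewrite oppr_eq0 expf_neq0.
rewrite -{1}[z](scalerK G0) gram; apply: vec3P; rewrite !coordE; field; exact: ab_neq0.
Qed.

Lemma null_frame_lcross_eq0 {z} : ldot a z = 0 ->
  (lcross a z == 0) = (ldot (lcross a b) z == 0).
Proof.
move=> az; apply/eqP/eqP => [az0|abz]; first by rewrite ldot_lcross_swap az0 ldot0l oppr0.
move: abz; rewrite ldotC => /null_frame_decomposition ->.
by rewrite [ldot z a]ldotC az mul0r scale0r addr0 lcross_scale_self.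
Qed.

End NullFrame.
End LorentzAlgebra.

Section VectorCalculus.
Context {R : realType}.
Implicit Types (x t : R) (F G N : R -> vec3 R).

Lemma is_derive_coord {F x} {F' : vec3 R} n : is_derive x 1 F F' ->
  is_derive x 1 (fun s => coord (F s) n) (coord F' n).
Proof.
case=> dF <-; split; first exact: (derivable_mxP F x 1).1 dF ord0 (inord n).
by rewrite (derive_mx dF) /coord mxE.
Qed.

Lemma is_derive_vec3 F x (F' : vec3 R) :
  is_derive x 1 (fun s => coord (F s) 0) (coord F' 0) ->
  is_derive x 1 (fun s => coord (F s) 1) (coord F' 1) ->
  is_derive x 1 (fun s => coord (F s) 2) (coord F' 2) ->
  is_derive x 1 F F'.
Proof.
move=> d0 d1 d2.
have dF (i : 'I_3) : is_derive x 1 (fun s => F s ord0 i) (F' ord0 i).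
  by case: i => -[|[|[|//]]] lt_i3; [move: d0 | move: d1 | move: d2];
    rewrite /coord (_ : inord _ = Ordinal lt_i3) //; exact/val_inj/inordK.
have FD : derivable F x 1.
  by apply/derivable_mxP => i j; rewrite (ord1 i); case: (dF j).
split=> //; rewrite (derive_mx FD); apply/matrixP => i j; rewrite mxE (ord1 i).
by case: (dF j).
Qed.

Lemma is_derive_lvec {f g h : R -> R} {x f' g' h'} :
  is_derive x 1 f f' -> is_derive x 1 g g' -> is_derive x 1 h h' ->
  is_derive x 1 (fun s => lvec (f s) (g s) (h s)) (lvec f' g' h').
Proof.
move=> df dg dh; apply: is_derive_vec3; rewrite coordE;
  by under eq_fun do rewrite coordE.
Qed.

Lemma is_derive_ldot {F G x} {F' G' : vec3 R} :
  is_derive x 1 F F' -> is_derive x 1 G G' ->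
  is_derive x 1 (fun s => ldot (F s) (G s)) (ldot F' (G x) + ldot (F x) G').
Proof.
move=> dF dG; rewrite /ldot.
(* [is_deriveM] states the product rule with [*:], which on [R] is [*]. *)
have dF0 : is_derive x 1 (fun s => - coord (F s) 0) (- coord F' 0).
  exact: is_deriveN (is_derive_coord 0 dF).
have := is_deriveD (is_deriveD
  (is_deriveM dF0 (is_derive_coord 0 dG))
  (is_deriveM (is_derive_coord 1 dF) (is_derive_coord 1 dG)))
  (is_deriveM (is_derive_coord 2 dF) (is_derive_coord 2 dG)).
by move/is_derive_eq; apply; rewrite /= -![_ *: _]/(_ * _); ring.
Qed.

Lemma is_derive_lcross {F G x} {F' G' : vec3 R} :
  is_derive x 1 F F' -> is_derive x 1 G G' ->
  is_derive x 1 (fun s => lcross (F s) (G s)) (lcross F' (G x) + lcross (F x) G').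
Proof.
move=> dF dG; apply: is_derive_vec3; rewrite /lcross !coordE.
- under eq_fun do rewrite coordE.
  have := is_deriveN (is_deriveB
    (is_deriveM (is_derive_coord 1 dF) (is_derive_coord 2 dG))
    (is_deriveM (is_derive_coord 2 dF) (is_derive_coord 1 dG))).
  by move/is_derive_eq; apply; rewrite /= -![_ *: _]/(_ * _); ring.
- under eq_fun do rewrite coordE.
  have := is_deriveB
    (is_deriveM (is_derive_coord 2 dF) (is_derive_coord 0 dG))
    (is_deriveM (is_derive_coord 0 dF) (is_derive_coord 2 dG)).
  by move/is_derive_eq; apply; rewrite /= -![_ *: _]/(_ * _); ring.
- under eq_fun do rewrite coordE.
  have := is_deriveB
    (is_deriveM (is_derive_coord 0 dF) (is_derive_coord 1 dG))
    (is_deriveM (is_derive_coord 1 dF) (is_derive_coord 0 dG)).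
  by move/is_derive_eq; apply; rewrite /= -![_ *: _]/(_ * _); ring.
Qed.

Lemma is_derive_scale {h : R -> R} {N x} {h' : R} {N' : vec3 R} :
  is_derive x 1 h h' -> is_derive x 1 N N' ->
  is_derive x 1 (fun s => h s *: N s) (h x *: N' + h' *: N x).
Proof.
move=> dh dN.
suff dk n : is_derive x 1 (fun s => coord (h s *: N s) n) (coord (h x *: N' + h' *: N x) n).
  by apply: is_derive_vec3; apply: dk.
rewrite !coordE; under eq_fun do rewrite coordE.
have := is_deriveM dh (is_derive_coord n dN).
by move/is_derive_eq; apply; rewrite /= -![_ *: _]/(_ * _); ring.
Qed.

Lemma ldot_derive_near_const {F G x} {F' G' : vec3 R} {k : R} :
  is_derive x 1 F F' -> is_derive x 1 G G' ->
  (\forall s \near x, ldot (F s) (G s) = k) -> ldot F' (G x) + ldot (F x) G' = 0.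
Proof.
move=> dF dG FGk.
have : is_derive x 1 (fun=> k) (ldot F' (G x) + ldot (F x) G').
  exact: near_eq_is_derive FGk (is_derive_ldot dF dG).
by case=> _ <-; rewrite derive_cst.
Qed.

Lemma ldot_self_derive_near_const {F x} {F' : vec3 R} {k : R} :
  (\forall s \near x, ldot (F s) (F s) = k) -> is_derive x 1 F F' -> ldot (F x) F' = 0.
Proof.
move=> Fk dF; have := ldot_derive_near_const dF dF Fk.
rewrite ldotC -mulr2n -mulr_natl => /eqP.
by rewrite mulf_eq0 pnatr_eq0 orFb => /eqP.
Qed.

Definition lnormalize (v : vec3 R) : vec3 R := (Num.sqrt (ldot v v))^-1 *: v.

Lemma ldot_lnormalize (v : vec3 R) : 0 < ldot v v ->
  ldot (lnormalize v) (lnormalize v) = 1.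
Proof.
move=> vv; rewrite /lnormalize ldotZl ldotZr mulrA -invfM -expr2 sqr_sqrtr ?ltW //.
by rewrite mulVf // gt_eqF.
Qed.

Lemma ldot_lnormalize_eq0 (v w : vec3 R) : 0 < ldot v v ->
  (ldot (lnormalize v) w == 0) = (ldot v w == 0).
Proof. by move=> vv; rewrite /lnormalize ldotZl mulf_eq0 invr_eq0 sqrtr_eq0 (lt_geF vv). Qed.

Lemma derivable_lnormalize {N x} {N' : vec3 R} :
  is_derive x 1 N N' -> 0 < ldot (N x) (N x) ->
  derivable (fun s => lnormalize (N s)) x 1.
Proof.
move=> dN NN; have dq := is_derive_ldot dN dN.
have dsq := @is_derive1_comp _ Num.sqrt _ x _ _ (is_derive1_sqrt NN) dq.
have dinv : derivable (fun s => (Num.sqrt (ldot (N s) (N s)))^-1) x 1.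
  by apply: derivableV; [rewrite sqrtr_eq0 -ltNge | case: dsq].
by case: (is_derive_scale (derivableP dinv) dN).
Qed.

Lemma lnormalize_lcross_derive {F G x} {F' G' : vec3 R} :
  is_derive x 1 F F' -> is_derive x 1 G G' ->
  0 < ldot (lcross (F x) (G x)) (lcross (F x) (G x)) ->
  let n := lnormalize (lcross (F x) (G x)) in
  let n' := derive1 (fun s => lnormalize (lcross (F s) (G s))) x in
  [/\ ldot n' n = 0, ldot n' (F x) = - ldot n F' & ldot n' (G x) = - ldot n G'].
Proof.
move=> dF dG NN n n'; have dN := is_derive_lcross dF dG.
have dn : is_derive x 1 (fun s => lnormalize (lcross (F s) (G s))) n'.
  by rewrite /n' derive1E; exact: derivableP (derivable_lnormalize dN NN).
have NN_near : \forall s \near x, 0 < ldot (lcross (F s) (G s)) (lcross (F s) (G s)).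
  have cont : {for x, continuous (fun s => ldot (lcross (F s) (G s)) (lcross (F s) (G s)))}.
    by apply/differentiable_continuous/derivable1_diffP; case: (is_derive_ldot dN dN).
  exact: cvgr_gt cont _ NN.
split.
- have unit : \forall s \near x, ldot (lnormalize (lcross (F s) (G s)))
                                      (lnormalize (lcross (F s) (G s))) = 1.
    by apply: filterS NN_near => s; exact: ldot_lnormalize.
  by rewrite ldotC; exact: ldot_self_derive_near_const unit dn.
- apply/eqP; rewrite -subr_eq0 opprK; apply/eqP.
  apply: (ldot_derive_near_const dn dF (k := 0)); apply: filterE => s.
  by rewrite /lnormalize ldotZl ldot_lcrossl mulr0.
- apply/eqP; rewrite -subr_eq0 opprK; apply/eqP.
  apply: (ldot_derive_near_const dn dG (k := 0)); apply: filterE => s.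
  by rewrite /lnormalize ldotZl ldot_lcrossr mulr0.
Qed.

Lemma degenerate_velocity {gamma V : R -> vec3 R} {t} :
  (\forall s \near t, is_derive s (1 : R) gamma (V s)) ->
  degenerate gamma t <-> lcross (V t) ('D_1 V t) = 0.
Proof.
move=> dgamma.
have d1 : \forall s \near t, derive1 gamma s = V s.
  by apply: filterS dgamma => s [_ <-]; rewrite derive1E.
by rewrite /degenerate (nbhs_singleton d1) derive1E (near_eq_derive _ d1).
Qed.

End VectorCalculus.

Local Notation i0 := (@ord0 1).
Local Notation i1 := (@ord_max 1).

Lemma ord2P (i : 'I_2) : i = i0 \/ i = i1.
Proof. by case: i => -[|[|//]] lt_i2; [left | right]; apply/val_inj. Qed.

Lemma sum_ord2 {V : nmodType} (F : 'I_2 -> V) : \sum_(i < 2) F i = F i0 + F i1.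
Proof.
rewrite (bigD1 i0) // (bigD1 i1) //= big1 ?addr0 // => i /andP[ne_i0 ne_i1].
by case: (ord2P i) ne_i0 ne_i1 => ->; rewrite eqxx.
Qed.

Lemma matrix2P (F : Type) (A B : 'M[F]_2) :
  A i0 i0 = B i0 i0 -> A i0 i1 = B i0 i1 -> A i1 i0 = B i1 i0 -> A i1 i1 = B i1 i1 ->
  A = B.
Proof.
move=> e00 e01 e10 e11; apply/matrixP => i j.
by case: (ord2P i) => ->; case: (ord2P j) => ->.
Qed.

Lemma mulmx2E (F : pzRingType) (A B : 'M[F]_2) i j :
  (A *m B) i j = A i i0 * B i0 j + A i i1 * B i1 j.
Proof. by rewrite mxE sum_ord2. Qed.

Lemma diagonalizable_sqr0 {F : fieldType} {n} {A : 'M[F]_n} :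
  diagonalizable A -> A *m A = 0 -> A = 0.
Proof.
case=> P Pu /(diagonalizable_forLR Pu) [d ->]; rewrite mxpoly.conjVmx // => AA.
have dd : diag_mx d *m diag_mx d = 0.
  have := congr1 (fun B => P *m B *m invmx P) AA.
  by rewrite mulmx0 mul0mx !mulmxA mulmxV // mul1mx !mulmxK.
have d0 : diag_mx d = 0.
  apply/matrixP => i j; rewrite [RHS]mxE.
  have := congr1 (fun B : 'M[F]_n => B i i) dd; rewrite mul_diag_mx !mxE eqxx mulr1n => /eqP.
  by rewrite mulf_eq0 orbb => /eqP ->; rewrite mul0rn.
by rewrite d0 mulmx0 mul0mx.
Qed.

Lemma antidiag_diagonalizable {C : numClosedFieldType} {M : 'M[C]_2} :
  M i0 i0 = 0 -> M i1 i1 = 0 ->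
  diagonalizable M <-> (M i0 i1 == 0) = (M i1 i0 == 0).
Proof.
move=> m00 m11; set p := M i0 i1; set q := M i1 i0.
have MM : M *m M = (p * q)%:M.
  by apply: matrix2P; rewrite mulmx2E !mxE /= -/p -/q ?m00 ?m11; ring.
split => [Md | ].
- have M2_0 : p * q = 0 -> M *m M = 0.
    by move=> pq0; rewrite MM pq0; apply/matrixP => i j; rewrite !mxE mul0rn.
  have [p0|p0] := eqVneq p 0; have [q0|q0] := eqVneq q 0 => //; exfalso.
  + have pq0 : p * q = 0 by rewrite p0 mul0r.
    move/matrixP/(_ i1 i0)/eqP: (diagonalizable_sqr0 Md (M2_0 pq0)).
    by rewrite mxE (negbTE q0).
  + have pq0 : p * q = 0 by rewrite q0 mulr0.
    move/matrixP/(_ i0 i1)/eqP: (diagonalizable_sqr0 Md (M2_0 pq0)).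
    by rewrite mxE (negbTE p0).
have [p0 /esym/eqP q0|p0 /esym/negbT q0] := eqVneq p 0.
  have -> : M = 0 by apply: matrix2P; rewrite !mxE.
  exact: diagonalizable0.
set mu := sqrtC (p * q).
have mu0 : mu != 0 by rewrite sqrtC_eq0 mulf_neq0.
have pE : p = mu ^+ 2 / q by rewrite sqrtCK mulfK.
apply/diagonalizableP; exists [:: mu; - mu].
  by rewrite /= inE andbT -addr_eq0 -mulr2n mulrn_eq0 negb_or mu0.
apply: mxminpoly_min; rewrite !big_cons big_nil mulr1 rmorphM !rmorphB /=.
rewrite horner_mx_X !horner_mx_C; apply: matrix2P;
  rewrite !mulmx2E !mxE /= ?m00 ?m11 -/p -/q ?pE; field; done.
Qed.

Lemma antidiag_real_diagonalizable {R : rcfType} {S : 'M[R]_2} :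
  S i0 i0 = 0 -> S i1 i1 = 0 ->
  diagonalizable (map_mx (fun x : R => (Complex x 0 : R[i])) S) <->
  (S i0 i1 == 0) = (S i1 i0 == 0).
Proof.
move=> s00 s11; rewrite antidiag_diagonalizable ?mxE ?s00 ?s11 //.
by rewrite -![(_ +i* 0)%C]/(real_complex R _) !fmorph_eq0.
Qed.

Section Chart.
Context {R : realType}.
Implicit Types (phi psi : R -> vec3 R) (c : vec3 R) (s t : R).

Lemma pu_chart phi psi c s t (D : vec3 R) : is_derive s 1 phi D ->
  pu (chart_f phi psi c) s t = 2^-1 *: D.
Proof.
move=> dphi; rewrite /pu /chart_f derive1E; apply: derive_val.
have := is_deriveD (is_deriveZ 2^-1 (is_deriveD dphi (is_derive_cst (psi t) s 1)))
  (is_derive_cst c s 1).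
by rewrite !addr0.
Qed.

Lemma pv_chart phi psi c s t (D : vec3 R) : is_derive t 1 psi D ->
  pv (chart_f phi psi c) s t = 2^-1 *: D.
Proof.
move=> dpsi; rewrite /pv /chart_f derive1E; apply: derive_val.
have := is_deriveD (is_deriveZ 2^-1 (is_deriveD (is_derive_cst (phi s) t 1) dpsi))
  (is_derive_cst c t 1).
by rewrite add0r addr0.
Qed.

Lemma is_shape_operator_unique {f : R -> R -> vec3 R} {s t} {S T : 'M[R]_2} :
  regular_at f s t -> is_shape_operator f s t S -> is_shape_operator f s t T -> S = T.
Proof.
move=> freg dS dT; apply/matrixP => i j.
have e : (S i0 j - T i0 j) *: dF f s t i0 + (S i1 j - T i1 j) *: dF f s t i1 = 0.
  rewrite !scalerBl addrACA -opprD -(sum_ord2 (fun i => S i j *: dF f s t i)).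
  by rewrite -(sum_ord2 (fun i => T i j *: dF f s t i)) dS dT subrr.
have [/eqP e0 /eqP e1] := freg _ _ e.
by case: (ord2P i) => ->; apply/eqP; rewrite -subr_eq0.
Qed.

End Chart.

Lemma bool_neq_iff (P Q : Prop) (b c : bool) : (P <-> b) -> (Q <-> c) ->
  (c <> b <-> (P /\ ~ Q) \/ (~ P /\ Q)).
Proof. by case: b; case: c => -[P1 P2] [Q1 Q2]; split; intuition. Qed.

Section NullCurveChart.
Context {R : realType} {phi psi Vphi Vpsi : R -> vec3 R} {c : vec3 R} {up vp : R}.
Hypothesis phi_velocity : \forall s \near up, is_derive s (1 : R) phi (Vphi s).
Hypothesis psi_velocity : \forall t \near vp, is_derive t (1 : R) psi (Vpsi t).
Hypothesis Vphi_null : \forall s \near up, ldot (Vphi s) (Vphi s) = 0.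
Hypothesis Vpsi_null : \forall t \near vp, ldot (Vpsi t) (Vpsi t) = 0.
Hypothesis Vphi_derivable : derivable Vphi up 1.
Hypothesis Vpsi_derivable : derivable Vpsi vp 1.
Hypothesis f_regular : regular_at (chart_f phi psi c) up vp.

Local Notation f := (chart_f phi psi c).
Local Notation a := (2^-1 *: Vphi up).
Local Notation b := (2^-1 *: Vpsi vp).
Local Notation II := (second_ff f up vp).

Lemma pu_chart_near : \forall s \near up, forall t, pu f s t = 2^-1 *: Vphi s.
Proof. by apply: filterS phi_velocity => s dphi t; apply: pu_chart. Qed.

Lemma pv_chart_near : \forall t \near vp, forall s, pv f s t = 2^-1 *: Vpsi t.
Proof. by apply: filterS psi_velocity => t dpsi s; apply: pv_chart. Qed.

Lemma dF_chart_u : dF f up vp i0 = a.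
Proof. exact: (nbhs_singleton pu_chart_near) vp. Qed.

Lemma dF_chart_v : dF f up vp i1 = b.
Proof. exact: (nbhs_singleton pv_chart_near) up. Qed.

Lemma a_null : ldot a a = 0.
Proof. by rewrite ldotZl ldotZr (nbhs_singleton Vphi_null) !mulr0. Qed.

Lemma b_null : ldot b b = 0.
Proof. by rewrite ldotZl ldotZr (nbhs_singleton Vpsi_null) !mulr0. Qed.

Lemma ab_neq0 : ldot a b != 0.
Proof.
apply: null_independent_ldot_neq0 a_null b_null => k l.
by rewrite -dF_chart_u -dF_chart_v; apply: f_regular.
Qed.

Lemma lcross_ab_gt0 : 0 < ldot (lcross a b) (lcross a b).
Proof.
by rewrite ldot_lcross_self a_null b_null mulr0 subr0 lt_def sqrf_eq0 ab_neq0 sqr_ge0.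
Qed.

Local Notation n := (lnormalize (lcross a b)).

Lemma unit_normal_derive_u : let nu := dF (unit_normal f) up vp i0 in
  [/\ ldot nu n = 0, ldot nu a = - ldot n (2^-1 *: 'D_1 Vphi up) & ldot nu b = 0].
Proof.
have dpu : is_derive up 1 (fun s => pu f s vp) (2^-1 *: 'D_1 Vphi up).
  apply: near_eq_is_derive (is_deriveZ _ (derivableP Vphi_derivable)).
  by apply: filterS pu_chart_near => s ->.
have dpv : is_derive up 1 (fun s => pv f s vp) 0.
  have -> : (fun s => pv f s vp) = cst b.
    by apply/funext => s; exact: (nbhs_singleton pv_chart_near) s.
  exact: is_derive_cst.
have pu_up : pu f up vp = a := dF_chart_u.
have pv_up : pv f up vp = b := dF_chart_v.
have := lnormalize_lcross_derive dpu dpv; rewrite pu_up pv_up.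
case/(_ lcross_ab_gt0) => nu_n nu_a; rewrite [ldot _ 0]ldotC ldot0l oppr0 => nu_b.
by split.
Qed.

Lemma unit_normal_derive_v : let nu := dF (unit_normal f) up vp i1 in
  [/\ ldot nu n = 0, ldot nu a = 0 & ldot nu b = - ldot n (2^-1 *: 'D_1 Vpsi vp)].
Proof.
have dpu : is_derive vp 1 (fun t => pu f up t) 0.
  have -> : (fun t => pu f up t) = cst a.
    by apply/funext => t; exact: (nbhs_singleton pu_chart_near) t.
  exact: is_derive_cst.
have dpv : is_derive vp 1 (fun t => pv f up t) (2^-1 *: 'D_1 Vpsi vp).
  apply: near_eq_is_derive (is_deriveZ _ (derivableP Vpsi_derivable)).
  by apply: filterS pv_chart_near => t ->.
have pu_up : pu f up vp = a := dF_chart_u.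
have pv_up : pv f up vp = b := dF_chart_v.
have := lnormalize_lcross_derive dpu dpv; rewrite pu_up pv_up.
case/(_ lcross_ab_gt0) => nu_n; rewrite [ldot _ 0]ldotC ldot0l oppr0 => nu_a nu_b.
by split.
Qed.

Lemma ldot_lcross_ab_eq0 (x : vec3 R) : ldot x n = 0 -> ldot x (lcross a b) = 0.
Proof. by rewrite ldotC => /eqP; rewrite ldot_lnormalize_eq0 ?lcross_ab_gt0 // ldotC => /eqP. Qed.

Lemma weingarten_u : dF (unit_normal f) up vp i0 = - (II i0 i0 / ldot a b) *: b.
Proof.
have [/ldot_lcross_ab_eq0 nu_n _ nu_b] := unit_normal_derive_u.
rewrite {1}(null_frame_decomposition a_null b_null ab_neq0 nu_n) nu_b mul0r scale0r add0r.
by rewrite /second_ff dF_chart_u mulNr opprK.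
Qed.

Lemma weingarten_v : dF (unit_normal f) up vp i1 = - (II i1 i1 / ldot a b) *: a.
Proof.
have [/ldot_lcross_ab_eq0 nu_n nu_a _] := unit_normal_derive_v.
rewrite {1}(null_frame_decomposition a_null b_null ab_neq0 nu_n) nu_a mul0r scale0r addr0.
by rewrite /second_ff dF_chart_v mulNr opprK.
Qed.

Lemma second_ff_chart_uv : II i0 i1 = 0.
Proof. by rewrite /second_ff weingarten_u dF_chart_v ldotZl b_null mulr0 oppr0. Qed.

Lemma second_ff_chart_vu : II i1 i0 = 0.
Proof. by rewrite /second_ff weingarten_v dF_chart_u ldotZl a_null mulr0 oppr0. Qed.

Lemma first_ff_chart_uu : first_ff f up vp i0 i0 = 0.
Proof. by rewrite /first_ff dF_chart_u a_null. Qed.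

Lemma first_ff_chart_vv : first_ff f up vp i1 i1 = 0.
Proof. by rewrite /first_ff dF_chart_v b_null. Qed.

Lemma second_ff_chart_uu : II i0 i0 = ldot n (2^-1 *: 'D_1 Vphi up).
Proof. by have [_ nu_a _] := unit_normal_derive_u; rewrite /second_ff dF_chart_u nu_a opprK. Qed.

Lemma second_ff_chart_vv : II i1 i1 = ldot n (2^-1 *: 'D_1 Vpsi vp).
Proof. by have [_ _ nu_b] := unit_normal_derive_v; rewrite /second_ff dF_chart_v nu_b opprK. Qed.

Lemma degenerate_phi_chart : degenerate phi up <-> II i0 i0 = 0.
Proof.
have h2 : (2^-1 : R) != 0 by rewrite invr_eq0 pnatr_eq0.
have E : (lcross (Vphi up) ('D_1 Vphi up) == 0) = (II i0 i0 == 0).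
  rewrite second_ff_chart_uu ldot_lnormalize_eq0 ?lcross_ab_gt0 // ldotZr.
  rewrite mulf_eq0 (negbTE h2) -(null_frame_lcross_eq0 a_null b_null ab_neq0).
    by rewrite lcrossZl scaler_eq0 (negbTE h2).
  by rewrite ldotZl (ldot_self_derive_near_const Vphi_null (derivableP Vphi_derivable)) mulr0.
rewrite (degenerate_velocity phi_velocity).
by split => /eqP H; apply/eqP; [rewrite -E | rewrite E].
Qed.

Lemma degenerate_psi_chart : degenerate psi vp <-> II i1 i1 = 0.
Proof.
have h2 : (2^-1 : R) != 0 by rewrite invr_eq0 pnatr_eq0.
have ba_neq0 : ldot b a != 0 by rewrite ldotC ab_neq0.
have E : (lcross (Vpsi vp) ('D_1 Vpsi vp) == 0) = (II i1 i1 == 0).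
  rewrite second_ff_chart_vv ldot_lnormalize_eq0 ?lcross_ab_gt0 // ldotZr.
  rewrite mulf_eq0 (negbTE h2) (lcrossC b a) ldotNl oppr_eq0.
  rewrite -(null_frame_lcross_eq0 b_null a_null ba_neq0).
    by rewrite lcrossZl scaler_eq0 (negbTE h2).
  by rewrite ldotZl (ldot_self_derive_near_const Vpsi_null (derivableP Vpsi_derivable)) mulr0.
rewrite (degenerate_velocity psi_velocity).
by split => /eqP H; apply/eqP; [rewrite -E | rewrite E].
Qed.

Lemma umbilic_chart : umbilic f up vp <-> II i0 i0 = 0 /\ II i1 i1 = 0.
Proof.
split => [[_ [lam IIlam]] | [II00 II11]].
  by rewrite !IIlam first_ff_chart_uu first_ff_chart_vv !mulr0.
split=> //; exists 0 => i j; rewrite mul0r.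
by case: (ord2P i) => ->; case: (ord2P j) => ->; rewrite ?second_ff_chart_uv ?second_ff_chart_vu.
Qed.

Local Notation shape := (\matrix_(i, j) if i == j then 0 else II j j / ldot a b).

Lemma is_shape_operator_chart : is_shape_operator f up vp shape.
Proof.
move=> j; rewrite sum_ord2 dF_chart_u dF_chart_v !mxE.
by case: (ord2P j) => ->; rewrite /= ?weingarten_u ?weingarten_v scaleNr opprK scale0r ?add0r ?addr0.
Qed.

Lemma quasi_umbilic_chart : quasi_umbilic f up vp <->
  (II i0 i0 = 0 /\ II i1 i1 <> 0) \/ (II i0 i0 <> 0 /\ II i1 i1 = 0).
Proof.
transitivity (~ diagonalizable (map_mx (fun x : R => (Complex x 0 : R[i])) shape)).
  split => [[_ [S [dS nondiag]]] | nondiag].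
    by rewrite -(is_shape_operator_unique f_regular dS is_shape_operator_chart).
  by split=> //; exists shape; split=> //; exact: is_shape_operator_chart.
have shape_diag i : shape i i = 0 by rewrite mxE eqxx.
have shape01 : shape i0 i1 = II i1 i1 / ldot a b by rewrite mxE; reflexivity.
have shape10 : shape i1 i0 = II i0 i0 / ldot a b by rewrite mxE; reflexivity.
rewrite (antidiag_real_diagonalizable (shape_diag i0) (shape_diag i1)) shape01 shape10.
rewrite !mulf_eq0 invr_eq0 (negbTE ab_neq0) !orbF.
by apply: bool_neq_iff; apply: rwP eqP.
Qed.

Theorem umbilic_quasi_umbilic_chart :
  (umbilic f up vp <-> degenerate phi up /\ degenerate psi vp) /\
  (quasi_umbilic f up vp <->
     (degenerate phi up /\ ~ degenerate psi vp) \/ (~ degenerate phi up /\ degenerate psi vp)).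
Proof.
by rewrite umbilic_chart quasi_umbilic_chart degenerate_phi_chart degenerate_psi_chart.
Qed.

End NullCurveChart.

Theorem proposition3p1 (R : realType) (g1 g2 w1 w2 : R -> R)
  (phi psi : R -> vec3 R) (c : vec3 R) (up vp : R) :
  smooth_near g1 up -> smooth_near w1 up ->
  smooth_near g2 vp -> smooth_near w2 vp ->
  (\forall u \near up, w1 u != 0) ->
  (\forall v \near vp, w2 v != 0) ->
  (\forall u \near up, is_derive u (1 : R) phi
      (w1 u *: lvec (- 1 - g1 u ^+ 2) (1 - g1 u ^+ 2) (2 * g1 u))) ->
  (\forall v \near vp, is_derive v (1 : R) psi
      (w2 v *: lvec (1 + g2 v ^+ 2) (1 - g2 v ^+ 2) (- 2 * g2 v))) ->
  regular_at (chart_f phi psi c) up vp ->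
  (umbilic (chart_f phi psi c) up vp <-> degenerate phi up /\ degenerate psi vp) /\
  (quasi_umbilic (chart_f phi psi c) up vp <->
     (degenerate phi up /\ ~ degenerate psi vp) \/
     (~ degenerate phi up /\ degenerate psi vp)).
Proof.
move=> g1_smooth w1_smooth g2_smooth w2_smooth _ _ dphi dpsi f_regular.
have dg1 : derivable g1 up 1 := nbhs_singleton (g1_smooth 0%N).
have dw1 : derivable w1 up 1 := nbhs_singleton (w1_smooth 0%N).
have dg2 : derivable g2 vp 1 := nbhs_singleton (g2_smooth 0%N).
have dw2 : derivable w2 vp 1 := nbhs_singleton (w2_smooth 0%N).
apply: (umbilic_quasi_umbilic_chart dphi dpsi) f_regular.
- by apply: filterE => s; rewrite /ldot !coordE; ring.
- by apply: filterE => t; rewrite /ldot !coordE; ring.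
- have dg := derivableP dg1.
  by case: (is_derive_scale (derivableP dw1) (is_derive_lvec
    (is_deriveB (is_derive_cst (-1 : R) up 1) (is_deriveX 2 dg))
    (is_deriveB (is_derive_cst (1 : R) up 1) (is_deriveX 2 dg))
    (is_deriveM (is_derive_cst (2 : R) up 1) dg))).
- have dg := derivableP dg2.
  by case: (is_derive_scale (derivableP dw2) (is_derive_lvec
    (is_deriveD (is_derive_cst (1 : R) vp 1) (is_deriveX 2 dg))
    (is_deriveB (is_derive_cst (1 : R) vp 1) (is_deriveX 2 dg))
    (is_deriveM (is_derive_cst (-2 : R) vp 1) dg))).
Qed.
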